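(* Let $m\ge 1$. The chip-firing process on the self-loop graph, beginning with $4m-1$ chips at site $0$, terminates with exactly $1$ chip at each of the positions $-m$, $0$ and $m$; exactly $2$ chips at each of the positions $-m+1,\dots,-1$ and $1,\dots,m-1$; and $0$ chips elsewhere.
   Context: The self-loop graph is the path graph on $\mathbb{Z}$ (each $i$ adjacent to $i\pm1$) with one self-loop at every vertex. A site can fire if it holds at least $3$ chips; firing sends one chip to each of the two neighboring sites and keeps one (the chip along the self-loop) at the site. The process terminates when every site has at most $2$ chips. *)

From Stdlib Require Import ZArith Relations.
Open Scope Z_scope.

Definition config := Z -> nat.

(* Firing site i: i loses 3 chips, sends one to each neighbour i-1, i+1, and
   keeps one (the chip along the self-loop): net change -2 at i. *)
Definition fire (c : config) (i : Z) : config :=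
  fun j => if Z.eq_dec j i then (c j - 2)%nat
           else if Z.eq_dec j (i - 1) then S (c j)
           else if Z.eq_dec j (i + 1) then S (c j)
           else c j.

Definition step (c c' : config) : Prop :=
  exists i : Z, (3 <= c i)%nat /\ forall j, c' j = fire c i j.

Definition stable (c : config) : Prop := forall j : Z, (c j <= 2)%nat.

Definition reachable : config -> config -> Prop := clos_refl_trans config step.

Definition init (N : nat) : config := fun j => if Z.eq_dec j 0 then N else 0%nat.

Definition final_config (m : Z) : config :=
  fun j => if Z.eq_dec j (-m) then 1%nat
           else if Z.eq_dec j 0 then 1%nat
           else if Z.eq_dec j m then 1%nat
           else if Z_lt_le_dec (-m) j then
                  (if Z_lt_le_dec j m then 2%nat else 0%nat)
           else 0%nat.

(* Record a run by its odometer u (how often each site has fired), so that the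
   configuration is c0 + Δu with Δ the discrete Laplacian.  The odometer
   v j = max(0, m - |j|)^2 satisfies c0 + Δv = final_config.  Least action: a
   site where u = v and u <= v at its neighbours carries at most
   (c0 + Δv) j <= 2 chips, so it cannot fire; hence every run keeps 0 <= u <= v,
   which bounds the number of firings.  At a stable end, d = v - u >= 0 vanishes
   at ±m and Δd = final_config - c is >= 0 off the origin and >= -1 at it.
   Convexity makes d nonincreasing away from 0 and, unless d 0 = 0, strictly so
   at the first step on each side, which would give Δd 0 <= -2.  So d = 0 and
   c = final_config. *)

From Stdlib Require Import ZArith Relations List Lia Wf_nat Classical FunctionalExtensionality.
Open Scope Z_scope.

Definition laplacian (u : Z -> Z) (j : Z) : Z := u (j - 1) + u (j + 1) - 2 * u j.

Lemma laplacian_reflect (u : Z -> Z) (k : Z) :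
  laplacian (fun j => u (- j)) k = laplacian u (- k).
Proof.
  unfold laplacian.
  replace (- (k - 1)) with (- k + 1) by lia; replace (- (k + 1)) with (- k - 1) by lia; lia.
Qed.

Lemma le_of_steps (f : Z -> Z) (a b : Z) :
  (forall k, a <= k < b -> f k <= f (k + 1)) ->
  forall j k, a <= j <= k -> k <= b -> f j <= f k.
Proof.
  intros Hstep j k [Haj Hjk]; revert k Hjk.
  apply (Z.le_ind (fun k => k <= b -> f j <= f k)); [intros ? ? ->; reflexivity | lia |].
  intros k Hjk IH Hkb; rewrite <- Z.add_1_r.
  specialize (Hstep k); lia.
Qed.

Lemma slope_le_of_laplacian_nonneg (f : Z -> Z) (a b : Z) :
  (forall k, a < k < b -> 0 <= laplacian f k) ->
  forall j k, a <= j <= k -> k < b -> f (j + 1) - f j <= f (k + 1) - f k.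
Proof.
  intros Hconv j k Hjk Hkb.
  apply (le_of_steps (fun k => f (k + 1) - f k) a (b - 1)); try lia.
  intros i Hi; specialize (Hconv (i + 1)); unfold laplacian in Hconv.
  replace (i + 1 - 1) with i in Hconv by lia; lia.
Qed.

Lemma convex_decreasing_to_zero (f : Z -> Z) (m : Z) :
  0 < m -> f m = 0 -> 0 <= f (m - 1) ->
  (forall k, 0 < k < m -> 0 <= laplacian f k) ->
  (forall k, 0 <= k <= m -> f k <= f 0) /\ (0 < f 0 -> f 1 < f 0).
Proof.
  intros Hm Hfm Hfm1 Hconv.
  pose proof slope_le_of_laplacian_nonneg f 0 m Hconv as Hslope.
  split.
  - intros k Hk.
    assert (Hdec : forall i, 0 <= i < m -> - f i <= - f (i + 1)).
    { intros i Hi; specialize (Hslope i (m - 1)).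
      replace (m - 1 + 1) with m in Hslope by lia; lia. }
    pose proof (le_of_steps (fun i => - f i) 0 m Hdec 0 k); lia.
  - intros Hf0; apply Z.nle_gt; intros Hf1.
    assert (Hinc : forall i, 0 <= i < m -> f i <= f (i + 1)).
    { intros i Hi; specialize (Hslope 0 i); change (0 + 1) with 1 in Hslope; lia. }
    pose proof (le_of_steps f 0 m Hinc 0 m); lia.
Qed.

Lemma eq0_of_convex_off_origin (d : Z -> Z) (m : Z) :
  0 < m -> (forall k, 0 <= d k) -> d (- m) = 0 -> d m = 0 ->
  (forall k, 0 < Z.abs k < m -> 0 <= laplacian d k) ->
  -1 <= laplacian d 0 ->
  forall k, - m <= k <= m -> d k = 0.
Proof.
  intros Hm Hd Hd_left Hd_right Hconv Horigin.
  destruct (convex_decreasing_to_zero d m) as [Hright Hright1]; auto.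
  { intros k Hk; apply Hconv; lia. }
  destruct (convex_decreasing_to_zero (fun k => d (- k)) m) as [Hleft Hleft1]; auto.
  { intros k Hk; rewrite laplacian_reflect; apply Hconv; lia. }
  cbn beta in *; change (Z.opp 0) with 0 in *; change (Z.opp 1) with (-1) in *.
  assert (Hd_origin : d 0 = 0).
  { unfold laplacian in Horigin; change (0 - 1) with (-1) in Horigin;
      change (0 + 1) with 1 in Horigin.
    specialize (Hd 0); lia. }
  intros k Hk; destruct (Z.le_gt_cases 0 k).
  - specialize (Hright k); specialize (Hd k); lia.
  - specialize (Hleft (- k)); rewrite Z.opp_involutive in Hleft; specialize (Hd k); lia.
Qed.

Lemma list_sum_map_le {A : Type} (f g : A -> nat) (l : list A) :
  (forall x, In x l -> (f x <= g x)%nat) ->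
  (list_sum (map f l) <= list_sum (map g l))%nat.
Proof.
  induction l as [|y l IH]; intros Hle; [reflexivity|].
  pose proof (Hle y (in_eq y l)); pose proof (IH (fun x Hx => Hle x (in_cons y x l Hx))).
  unfold list_sum in *; cbn; lia.
Qed.

Lemma list_sum_map_lt {A : Type} (f g : A -> nat) (l : list A) (x : A) :
  (forall y, In y l -> (f y <= g y)%nat) -> In x l -> (f x < g x)%nat ->
  (list_sum (map f l) < list_sum (map g l))%nat.
Proof.
  intros Hle Hx Hlt; destruct (in_split x l Hx) as (l1 & l2 & ->).
  rewrite !map_app, !list_sum_app.
  pose proof (list_sum_map_le f g l1 (fun y Hy => Hle y (in_or_app _ _ _ (or_introl Hy)))).
  pose proof (list_sum_map_le f g l2
    (fun y Hy => Hle y (in_or_app _ _ _ (or_intror (in_cons x y l2 Hy))))).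
  unfold list_sum in *; cbn; lia.
Qed.

Definition odometer (c0 c : config) (u : Z -> Z) : Prop :=
  forall j, Z.of_nat (c j) = Z.of_nat (c0 j) + laplacian u j.

Definition incr (u : Z -> Z) (i : Z) : Z -> Z :=
  fun j => if Z.eq_dec j i then u j + 1 else u j.

Lemma odometer_fire (c0 c : config) (u : Z -> Z) (i : Z) :
  (2 <= c i)%nat -> odometer c0 c u -> odometer c0 (fire c i) (incr u i).
Proof.
  intros Hi Hu j; specialize (Hu j); unfold fire, incr, laplacian in *.
  repeat destruct Z.eq_dec; subst; try lia.
Qed.

Section LeastAction.

Variables (c0 : config) (v : Z -> Z).

Hypothesis v_stabilizing : forall j, Z.of_nat (c0 j) + laplacian v j <= 2.

Definition dominated_odometer (c : config) (u : Z -> Z) : Prop :=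
  odometer c0 c u /\ forall j, 0 <= u j <= v j.

Lemma dominated_odometer_lt (c : config) (u : Z -> Z) (i : Z) :
  dominated_odometer c u -> (3 <= c i)%nat -> u i < v i.
Proof.
  intros [Hu Hb] Hi; specialize (Hu i); specialize (v_stabilizing i).
  pose proof (Hb i); pose proof (Hb (i - 1)); pose proof (Hb (i + 1)).
  unfold laplacian in *; lia.
Qed.

Lemma dominated_odometer_step (c c' : config) (u : Z -> Z) :
  dominated_odometer c u -> step c c' ->
  exists i, u i < v i /\ dominated_odometer c' (incr u i).
Proof.
  intros Hdom [i [Hi Hc']]; exists i.
  pose proof (dominated_odometer_lt c u i Hdom Hi) as Hlt.
  destruct Hdom as [Hu Hb]; split; [exact Hlt | split].
  - intros j; rewrite Hc'; apply odometer_fire; [lia | exact Hu].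
  - intros j; specialize (Hb j); unfold incr; destruct Z.eq_dec; subst; lia.
Qed.

Lemma dominated_odometer_reachable (c c' : config) (u : Z -> Z) :
  reachable c c' -> dominated_odometer c u -> exists u', dominated_odometer c' u'.
Proof.
  intros Hr; revert u; induction Hr as [c c' Hs | c | c c' c'' _ IH _ IH']; intros u Hdom.
  - destruct (dominated_odometer_step c c' u Hdom Hs) as [i [_ Hdom']]; eauto.
  - eauto.
  - destruct (IH u Hdom) as [u' Hdom']; eauto.
Qed.

Variables a b : Z.

Hypothesis v_supported : forall j, j < a \/ b < j -> v j = 0.

Definition slack (u : Z -> Z) : nat :=
  list_sum (map (fun n => Z.to_nat (v (a + Z.of_nat n) - u (a + Z.of_nat n)))
                (seq 0 (Z.to_nat (b - a + 1)))).

Lemma slack_incr (c : config) (u : Z -> Z) (i : Z) :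
  dominated_odometer c u -> u i < v i -> (slack (incr u i) < slack u)%nat.
Proof.
  intros [_ Hb] Hlt.
  assert (Hi : a <= i <= b).
  { specialize (Hb i); destruct (Z.le_gt_cases a i), (Z.le_gt_cases i b);
      try rewrite v_supported in Hlt by lia; lia. }
  apply list_sum_map_lt with (x := Z.to_nat (i - a)).
  - intros n _; specialize (Hb (a + Z.of_nat n)); unfold incr; destruct Z.eq_dec; lia.
  - apply in_seq; lia.
  - rewrite Z2Nat.id by lia; replace (a + (i - a)) with i by lia.
    unfold incr; destruct Z.eq_dec; lia.
Qed.

Lemma acc_of_dominated_odometer (c : config) (u : Z -> Z) :
  dominated_odometer c u -> Acc (fun y x => step x y) c.
Proof.
  revert c; induction u as [u IH] using (induction_ltof1 _ slack); intros c Hdom.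
  constructor; intros c' Hs.
  destruct (dominated_odometer_step c c' u Hdom Hs) as [i [Hlt Hdom']].
  exact (IH _ (slack_incr c u i Hdom Hlt) c' Hdom').
Qed.

End LeastAction.

Lemma reachable_stable_of_acc (c : config) :
  Acc (fun y x => step x y) c -> exists c', reachable c c' /\ stable c'.
Proof.
  induction 1 as [c _ IH].
  destruct (classic (stable c)) as [Hs | Hs]; [exists c; split; [apply rt_refl | exact Hs]|].
  apply not_all_ex_not in Hs as [j Hj].
  assert (Hstep : step c (fire c j)) by (exists j; split; [lia | reflexivity]).
  destruct (IH _ Hstep) as [c' [Hr Hs']].
  exists c'; split; [exact (rt_trans _ _ _ _ _ (rt_step _ _ _ _ Hstep) Hr) | exact Hs'].
Qed.

Definition final_odometer (m j : Z) : Z := Z.max 0 (m - Z.abs j) ^ 2.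

Lemma odometer_final_config (m : Z) :
  1 <= m -> odometer (init (Z.to_nat (4 * m - 1))) (final_config m) (final_odometer m).
Proof.
  intros Hm j; unfold init, final_config, odometer, final_odometer, laplacian.
  rewrite !Z.pow_2_r.
  repeat destruct Z.eq_dec; repeat destruct Z_lt_le_dec; subst;
    rewrite ?Z2Nat.id by lia; cbn [Z.of_nat Pos.of_succ_nat];
    repeat match goal with
           |- context [Z.abs ?x] => destruct (Z.abs_spec x) as [[? ->]|[? ->]]
           end;
    repeat match goal with
           |- context [Z.max 0 ?x] => destruct (Z.max_spec 0 x) as [[? ->]|[? ->]]
           end;
    try lia; nia.
Qed.

Lemma final_odometer_outside (m j : Z) : j <= - m \/ m <= j -> final_odometer m j = 0.
Proof. intros Hj; unfold final_odometer; rewrite Z.max_l by lia; reflexivity. Qed.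

Lemma final_config_stable (m : Z) : stable (final_config m).
Proof.
  intros j; unfold final_config; repeat destruct Z.eq_dec; repeat destruct Z_lt_le_dec; lia.
Qed.

Lemma final_config_rigid (m : Z) (c : config) (u : Z -> Z) :
  1 <= m ->
  dominated_odometer (init (Z.to_nat (4 * m - 1))) (final_odometer m) c u ->
  stable c -> forall j, c j = final_config m j.
Proof.
  intros Hm [Hu Hb] Hc.
  set (d := fun j => final_odometer m j - u j).
  assert (Hlap : forall k, laplacian d k = Z.of_nat (final_config m k) - Z.of_nat (c k)).
  { intros k; rewrite (Hu k), (odometer_final_config m Hm k); unfold d, laplacian; lia. }
  assert (Hd : forall k, 0 <= d k) by (intros k; specialize (Hb k); unfold d; lia).
  assert (Hout : forall k, k <= - m \/ m <= k -> d k = 0).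
  { intros k Hk; specialize (Hb k); unfold d in *.
    rewrite final_odometer_outside in * by lia; lia. }
  assert (Hd_zero : forall k, d k = 0).
  { intros k; destruct (Z.le_gt_cases k (- m)), (Z.le_gt_cases m k); try (apply Hout; lia).
    apply (eq0_of_convex_off_origin d m); try (apply Hout; lia); try lia; [exact Hd | |].
    - intros i Hi; rewrite Hlap; specialize (Hc i).
      unfold final_config; repeat destruct Z.eq_dec; repeat destruct Z_lt_le_dec; lia.
    - rewrite Hlap; specialize (Hc 0).
      unfold final_config; repeat destruct Z.eq_dec; repeat destruct Z_lt_le_dec; lia. }
  assert (Hu_final : forall k, u k = final_odometer m k).
  { intros k; specialize (Hd_zero k); unfold d in Hd_zero; lia. }
  intros j; apply Nat2Z.inj; rewrite (Hu j), (odometer_final_config m Hm j).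
  unfold laplacian; rewrite !Hu_final; reflexivity.
Qed.

Theorem lemma3p8 (m : Z) (hm : 1 <= m) :
  let c0 := init (Z.to_nat (4 * m - 1)) in
  (* the process terminates: no infinite sequence of legal firings *)
  Acc (fun y x => step x y) c0 /\
  (* the final configuration is reached *)
  reachable c0 (final_config m) /\ stable (final_config m) /\
  (* and every terminal configuration of the process is this one *)
  (forall c, reachable c0 c -> stable c -> forall j, c j = final_config m j).
Proof.
  intros c0.
  pose proof (odometer_final_config m hm) as Hfinal.
  assert (Hstab : forall j, Z.of_nat (c0 j) + laplacian (final_odometer m) j <= 2).
  { intros j; rewrite <- Hfinal; pose proof (final_config_stable m j); lia. }
  assert (Hstart : dominated_odometer c0 (final_odometer m) c0 (fun _ => 0)).
  { split; [intros j; unfold laplacian; lia |].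
    intros j; unfold final_odometer; split; [lia | apply Z.pow_nonneg; lia]. }
  assert (Hunique : forall c, reachable c0 c -> stable c -> forall j, c j = final_config m j).
  { intros c Hr Hc; destruct (dominated_odometer_reachable _ _ Hstab c0 c _ Hr Hstart) as [u Hu].
    exact (final_config_rigid m c u hm Hu Hc). }
  assert (Hacc : Acc (fun y x => step x y) c0).
  { apply (acc_of_dominated_odometer _ _ Hstab (- m) m) with (u := fun _ => 0); [|exact Hstart].
    intros j Hj; apply final_odometer_outside; lia. }
  destruct (reachable_stable_of_acc c0 Hacc) as [c [Hr Hc]].
  assert (Hc_final : c = final_config m).
  { apply functional_extensionality; exact (Hunique c Hr Hc). }
  subst c; exact (conj Hacc (conj Hr (conj Hc Hunique))).
Qed.
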